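(* (i) For every family $(X_j)_{j\in J}$ of pseudotopological spaces, the natural map $\pi_0^{\mathrm{ps}}\big(\prod_{j} X_j\big)\to\prod_j\pi_0^{\mathrm{ps}}X_j$, sending the path component of $(x_j)_j$ to the family of path components of the $x_j$, is an isomorphism in $\mathsf{PsTop}$ (i.e. $\pi_0^{\mathrm{ps}}$ preserves products). (ii) For every finite family $X_1,\dots,X_n$ of epitopological spaces, the analogous natural map $\pi_0^{\mathrm{epi}}(X_1\times\dots\times X_n)\to\pi_0^{\mathrm{epi}}X_1\times\dots\times\pi_0^{\mathrm{epi}}X_n$ is an isomorphism in $\mathsf{EpiTop}$ (i.e. $\pi_0^{\mathrm{epi}}$ preserves finite products).
   Context: For a set $X$, $U(X)$ is the set of ultrafilters on $X$, $\dot x$ the principal ultrafilter at $x$; for $f\colon X\to Y$ and a filter $\mathscr F$ on $X$, $f_*\mathscr F=\{S\subset Y:f^{-1}(S)\in\mathscr F\}$. A pseudotopological space is a set $X$ with a relation $u\subset U(X)\times X$ containing all $(\dot x,x)$; write $\mathscr U\to x$ for $(\mathscr U,x)\in u$; for a filter $\mathscr F$, $\mathscr F\to x$ means every ultrafilter containing $\mathscr F$ converges to $x$. Continuous maps: $\mathscr U\to x\Rightarrow f_*\mathscr U\to f(x)$; this gives the category $\mathsf{PsTop}$. Initial structure for maps $f_j\colon X\to X_j$: $\mathscr U\to x$ iff $(f_j)_*\mathscr U\to f_j(x)$ for all $j$; products carry the initial structure w.r.t. projections. Final structure for maps $f_j\colon X_j\to X$: $\mathscr U\to x$ iff $\mathscr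 U=\dot x$ or $\mathscr U=(f_j)_*\mathscr V$, $x=f_j(z)$ for some $j$ and some $\mathscr V\to z$ in $X_j$. Topological spaces are regarded as pseudotopological spaces via ultrafilter convergence. For pseudotopological $X,Y$, $Y^X$ is the set of continuous maps $X\to Y$ where a filter $\mathscr F$ converges to $f$ iff for every filter $\mathscr G\to x$ in $X$, $\mathrm{ev}_*(\mathscr F\times\mathscr G)\to f(x)$ ($\mathscr F\times\mathscr G$ generated by the sets $F\times G$, $\mathrm{ev}(g,x)=g(x)$). A pseudotopological space is epitopological if its structure is initial w.r.t. some family of maps $X\to Z_j^{Y_j}$ with $Y_j,Z_j$ topological spaces; $\mathsf{EpiTop}$ is the full subcategory of such spaces; products in $\mathsf{EpiTop}$ are the products in $\mathsf{PsTop}$. A path in $X$ is a continuous map $[0,1]\to X$ ($[0,1]$ with the usual topology). For a pseudotopological space $X$, $\pi_0^{\mathrm{ps}}X$ is the set of path components of $X$ with the final pseudotopology w.r.t. the natural projection from $X$. For an epitopological space $X$, $\pi_0^{\mathrm{epi}}X$ is the set of path components with the quotient epitopology, i.e. the smallest (fewest convergent pairs) epitopological structure making the projection continuous. *)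

From Stdlib Require Import Reals.

Set Implicit Arguments.

Definition setsys (X : Type) := (X -> Prop) -> Prop.

(* A filter (not required to be proper). *)
Definition is_filter {X : Type} (F : setsys X) : Prop :=
  F (fun _ => True) /\
  (forall A B, F A -> F B -> F (fun x => A x /\ B x)) /\
  (forall A B : X -> Prop, (forall x, A x -> B x) -> F A -> F B).

Definition is_proper_filter {X : Type} (F : setsys X) : Prop :=
  is_filter F /\ ~ F (fun _ => False).

Definition is_ultra {X : Type} (U : setsys X) : Prop :=
  is_proper_filter U /\ forall A, U A \/ U (fun x => ~ A x).

Definition principal {X : Type} (x : X) : setsys X := fun A => A x.

Definition push {X Y : Type} (f : X -> Y) (F : setsys X) : setsys Y :=
  fun S => F (fun x => S (f x)).

Definition finer {X : Type} (F U : setsys X) : Prop := forall A, F A -> U A.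

Definition prodF {X Y : Type} (F : setsys X) (G : setsys Y) : setsys (X * Y) :=
  fun W => exists A B, F A /\ G B /\ forall a b, A a -> B b -> W (a, b).

(* A (raw) convergence space: a set with a relation between set systems and
   points.  Pseudotopological spaces are those satisfying [PsAxioms]. *)
Record PsSpace := { pt :> Type; conv : setsys pt -> pt -> Prop }.

Definition PsAxioms (X : PsSpace) : Prop :=
  (forall U x, conv X U x -> is_ultra U) /\
  (forall x, conv X (principal x) x).

Definition fconv (X : PsSpace) (F : setsys X) (x : X) : Prop :=
  forall U, is_ultra U -> finer F U -> conv X U x.

Definition continuous (X Y : PsSpace) (f : X -> Y) : Prop :=
  forall U x, conv X U x -> conv Y (push f U) (f x).

Definition ps_iso (X Y : PsSpace) (f : X -> Y) : Prop :=
  exists g : Y -> X, (forall x, g (f x) = x) /\ (forall y, f (g y) = y) /\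
    continuous X Y f /\ continuous Y X g.

Definition prodPs (J : Type) (X : J -> PsSpace) : PsSpace :=
  {| pt := forall j, X j;
     conv := fun U x => is_ultra U /\
               forall j, conv (X j) (push (fun y : forall j, X j => y j) U) (x j) |}.

Record TopSpace := { tpt :> Type; is_open : (tpt -> Prop) -> Prop }.

Definition TopAxioms (T : TopSpace) : Prop :=
  is_open T (fun _ => True) /\
  (forall A B, is_open T A -> is_open T B -> is_open T (fun x => A x /\ B x)) /\
  (forall (I : Type) (A : I -> tpt T -> Prop), (forall i, is_open T (A i)) ->
      is_open T (fun x => exists i, A i x)).

Definition topPs (T : TopSpace) : PsSpace :=
  {| pt := tpt T;
     conv := fun U x => is_ultra U /\ forall O, is_open T O -> O x -> U O |}.

Definition fspace (X Y : PsSpace) : PsSpace :=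
  {| pt := { f : X -> Y | continuous X Y f };
     conv := fun U f => is_ultra U /\
       forall (G : setsys X) (x : X), is_filter G -> fconv X G x ->
         fconv Y (push (fun p : { f : X -> Y | continuous X Y f } * X =>
                           proj1_sig (fst p) (snd p)) (prodF U G))
               (proj1_sig f x) |}.

(* epitopological: initial w.r.t. a family of maps X -> Z_i^{Y_i} with
   Y_i, Z_i topological *)
Definition is_epitop (X : PsSpace) : Prop :=
  exists (I : Type) (Y Z : I -> TopSpace)
         (h : forall i, X -> fspace (topPs (Y i)) (topPs (Z i))),
    (forall i, TopAxioms (Y i) /\ TopAxioms (Z i)) /\
    forall U x, conv X U x <->
      (is_ultra U /\
       forall i, conv (fspace (topPs (Y i)) (topPs (Z i))) (push (h i) U) (h i x)).

Definition unitI : TopSpace :=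
  {| tpt := { t : R | (0 <= t <= 1)%R };
     is_open := fun O => forall t, O t -> exists eps, (0 < eps)%R /\
        forall s, (Rabs (proj1_sig s - proj1_sig t) < eps)%R -> O s |}.

Lemma unitI0_proof : (0 <= 0 <= 1)%R.
Proof. split; [apply Rle_refl | apply Rle_0_1]. Qed.
Lemma unitI1_proof : (0 <= 1 <= 1)%R.
Proof. split; [apply Rle_0_1 | apply Rle_refl]. Qed.
Definition i0 : unitI := exist _ 0%R unitI0_proof.
Definition i1 : unitI := exist _ 1%R unitI1_proof.

Definition pathrel (X : PsSpace) (x y : X) : Prop :=
  exists p : unitI -> X, continuous (topPs unitI) X p /\ p i0 = x /\ p i1 = y.

Definition pcomp (X : PsSpace) (x : X) : X -> Prop := fun y => pathrel X x y.

Definition pi0car (X : PsSpace) : Type := { C : X -> Prop | exists x, C = pcomp X x }.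

Definition pi0proj (X : PsSpace) (x : X) : pi0car X :=
  exist _ (pcomp X x) (ex_intro _ x eq_refl).

(* pi_0^ps : final pseudotopology w.r.t. the projection *)
Definition pi0ps (X : PsSpace) : PsSpace :=
  {| pt := pi0car X;
     conv := fun U c => U = principal c \/
        exists V x, conv X V x /\ c = pi0proj X x /\ U = push (pi0proj X) V |}.

(* pi_0^epi : the smallest epitopological structure making the projection
   continuous (intersection of all such structures) *)
Definition pi0epi (X : PsSpace) : PsSpace :=
  {| pt := pi0car X;
     conv := fun U c => is_ultra U /\
       forall s : setsys (pi0car X) -> pi0car X -> Prop,
         PsAxioms {| pt := pi0car X; conv := s |} ->
         is_epitop {| pt := pi0car X; conv := s |} ->
         continuous X {| pt := pi0car X; conv := s |} (pi0proj X) ->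
         s U c |}.

(* Paths in a product are families of paths, so the path components of a product are
   the products of path components; and a convergent ultrafilter on a product of the
   quotients [pi0ps X_j] lifts to a convergent ultrafilter on the product of the [X_j],
   which gives (i).  For (ii), continuity into an epitopological space is tested against
   function spaces [Z^Y] with [Z] topological, and by the exponential law against the
   uncurried maps [prod_j pi0 X_j * Y -> Z].  These can be upgraded from [pi0ps] to
   [pi0epi] one coordinate at a time: currying in that coordinate gives a map into
   [Z^W], and [Z^W] is epitopological for every pseudotopological [W]. *)

From Stdlib Require Import Reals.
From Stdlib Require Import List FinFun Classical ClassicalEpsilon
  FunctionalExtensionality PropExtensionality ProofIrrelevance.
From mathcomp Require filter.

Lemma dependent_choice {J : Type} {A : J -> Type} (P : forall j, A j -> Prop) :
  (forall j, exists a, P j a) -> exists f : forall j, A j, forall j, P j (f j).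
Proof.
  intro h.
  exists (fun j => proj1_sig (constructive_indefinite_description _ (h j))).
  intro j. exact (proj2_sig (constructive_indefinite_description _ (h j))).
Qed.

Definition upd {J : Type} {T : J -> Type} (p : forall j, T j) (j : J) (a : T j) :
    forall k, T k :=
  fun k => match excluded_middle_informative (j = k) with
           | left e => eq_rect j T a k e
           | right _ => p k
           end.

Lemma upd_same {J : Type} {T : J -> Type} (p : forall j, T j) j a : upd p j a j = a.
Proof.
  unfold upd. destruct (excluded_middle_informative (j = j)) as [e|n]; [|contradiction].
  rewrite (proof_irrelevance _ e eq_refl). reflexivity.
Qed.

Lemma upd_other {J : Type} {T : J -> Type} (p : forall j, T j) j a k :
  j <> k -> upd p j a k = p k.
Proof.
  unfold upd. destruct (excluded_middle_informative (j = k)); [contradiction|reflexivity].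
Qed.

Lemma upd_id {J : Type} {T : J -> Type} (p : forall j, T j) j : upd p j (p j) = p.
Proof.
  apply functional_extensionality_dep. intro k. unfold upd.
  destruct (excluded_middle_informative (j = k)) as [<-|_]; reflexivity.
Qed.

(** * Filters and ultrafilters *)

Section Filters.

Context {T : Type}.
Implicit Types (F G U V : setsys T) (A B : T -> Prop).

Lemma filter_true {F} : is_filter F -> F (fun _ => True).
Proof. intros [h _]. exact h. Qed.

Lemma filter_and {F A B} : is_filter F -> F A -> F B -> F (fun x => A x /\ B x).
Proof. intros [_ [h _]]. apply h. Qed.

Lemma filter_mono {F A B} : is_filter F -> (forall x, A x -> B x) -> F A -> F B.
Proof. intros [_ [_ h]]. apply h. Qed.

Lemma filter_forall_list {J : Type} {F} (l : list J) (P : J -> T -> Prop) :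
  is_filter F -> (forall j, In j l -> F (P j)) -> F (fun x => forall j, In j l -> P j x).
Proof.
  intro hF. induction l as [|j l IH]; intro h.
  - apply (filter_mono hF (A := fun _ => True)); [intros x _ k []|apply filter_true, hF].
  - apply (filter_mono hF) with (2 := filter_and hF (h j (in_eq j l))
                                      (IH (fun k hk => h k (in_cons j k l hk)))).
    intros x [hj hl] k [<-|hk]; auto.
Qed.

Lemma ultra_filter {U} : is_ultra U -> is_filter U.
Proof. intros [[h _] _]. exact h. Qed.

Lemma ultra_nonempty {U A} : is_ultra U -> U A -> exists x, A x.
Proof.
  intros HU hA. apply NNPP. intro N. apply (proj2 (proj1 HU)).
  apply (filter_mono (ultra_filter HU)) with (2 := hA).
  intros x Ax. apply N. exists x. exact Ax.
Qed.

Lemma ultra_compl {U A} : is_ultra U -> U A -> ~ U (fun x => ~ A x).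
Proof.
  intros HU hA hnA.
  destruct (ultra_nonempty HU (filter_and (ultra_filter HU) hA hnA)) as [x [a na]].
  exact (na a).
Qed.

Lemma ultra_const {U} (P : Prop) : is_ultra U -> U (fun _ => P) <-> P.
Proof.
  intro HU. split.
  - intro h. destruct (ultra_nonempty HU h) as [_ p]. exact p.
  - intro p. apply (filter_mono (ultra_filter HU) (A := fun _ => True)); auto.
    apply filter_true, ultra_filter, HU.
Qed.

Lemma ultra_principal (x : T) : is_ultra (principal x).
Proof.
  split; [split; [split; [exact I|split]|]|].
  - intros A B a b. split; assumption.
  - intros A B h a. exact (h x a).
  - intro f. exact f.
  - intro A. apply classic.
Qed.

Lemma setsys_ext F G : (forall A, F A <-> G A) -> F = G.
Proof.
  intro h. apply functional_extensionality. intro A. apply propositional_extensionality, h.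
Qed.

Lemma ultra_finer_eq {U V} : is_ultra U -> is_ultra V -> finer U V -> V = U.
Proof.
  intros HU HV h. apply setsys_ext. intro A. split; [|apply h].
  intro hA. destruct (proj2 HU A) as [u|u]; [exact u|].
  exfalso. exact (ultra_compl HV hA (h _ u)).
Qed.

Lemma ultra_extends {F} :
  is_filter F -> ~ F (fun _ => False) -> exists U, is_ultra U /\ finer F U.
Proof.
  intros [hT [hI hS]] hne.
  assert (PF : filter.ProperFilter F).
  { constructor; [exact hne|]. constructor; [exact hT|intros A B; apply hI|].
    intros A B h. apply hS. exact h. }
  destruct (filter.ultraFilterLemma PF) as [U [HU hFU]].
  exists U. split; [|exact hFU].
  split; [|intro A; exact (filter.in_ultra_setVsetC A HU)].
  destruct HU as [[hUne [hUT hUI hUS]] _].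
  split; [split; [exact hUT|split]|exact hUne].
  - intros A B. apply hUI.
  - intros A B h. apply hUS. exact h.
Qed.

End Filters.

Lemma ultra_of_base {T I : Type} (b : I -> T -> Prop) :
  inhabited I -> (forall i1 i2, exists i3, forall x, b i3 x -> b i1 x /\ b i2 x) ->
  (forall i, exists x, b i x) -> exists U, is_ultra U /\ forall i, U (b i).
Proof.
  intros [i0] hdir hne.
  set (F := fun S : T -> Prop => exists i, forall x, b i x -> S x).
  assert (hF : is_filter F).
  { split; [exists i0; auto|split].
    - intros A B [i1 h1] [i2 h2]. destruct (hdir i1 i2) as [i3 h3].
      exists i3. intros x bx. destruct (h3 x bx). split; auto.
    - intros A B h [i hi]. exists i. auto. }
  destruct (ultra_extends hF) as [U [HU hFU]].
  - intros [i hi]. destruct (hne i) as [x bx]. exact (hi x bx).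
  - exists U. split; [exact HU|]. intro i. apply hFU. exists i. auto.
Qed.

Lemma filter_mem_of_ultra {T : Type} {F : setsys T} (O : T -> Prop) :
  is_filter F -> (forall U, is_ultra U -> finer F U -> U O) -> F O.
Proof.
  intros hF h. apply NNPP. intro N.
  destruct (ultra_of_base (I := {S | F S}) (fun i x => proj1_sig i x /\ ~ O x))
    as [U [HU hU]].
  - exact (inhabits (exist _ _ (filter_true hF))).
  - intros [S1 h1] [S2 h2]. exists (exist _ _ (filter_and hF h1 h2)). simpl. tauto.
  - intros [S hS]. simpl. apply NNPP. intro M. apply N.
    apply (filter_mono hF) with (2 := hS).
    intros x Sx. apply NNPP. intro Ox. apply M. eauto.
  - assert (hFU : finer F U).
    { intros S hS. apply (filter_mono (ultra_filter HU)) with (2 := hU (exist _ S hS)).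
      simpl. tauto. }
    apply (ultra_compl HU (h U HU hFU)).
    apply (filter_mono (ultra_filter HU)) with (2 := hU (exist _ _ (filter_true hF))).
    simpl. tauto.
Qed.

Lemma push_ext {X Y : Type} (f g : X -> Y) (F : setsys X) :
  (forall x, f x = g x) -> push f F = push g F.
Proof. intro h. replace g with f; [reflexivity|]. apply functional_extensionality, h. Qed.

Lemma filter_push {X Y : Type} (f : X -> Y) {F : setsys X} :
  is_filter F -> is_filter (push f F).
Proof.
  intros [h1 [h2 h3]]. split; [exact h1|split].
  - intros A B. apply h2.
  - intros A B h. apply h3. intro x. apply h.
Qed.

Lemma ultra_push {X Y : Type} (f : X -> Y) {U : setsys X} :
  is_ultra U -> is_ultra (push f U).
Proof.
  intros [[hf hn] hu]. split; [split; [apply filter_push, hf|exact hn]|].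
  intro A. apply (hu (fun x => A (f x))).
Qed.

Lemma push_const {X Y : Type} {U : setsys X} (y : Y) :
  is_ultra U -> push (fun _ => y) U = principal y.
Proof. intro HU. apply setsys_ext. intro A. exact (ultra_const _ HU). Qed.

Lemma filter_prodF {X Y : Type} {F : setsys X} {G : setsys Y} :
  is_filter F -> is_filter G -> is_filter (prodF F G).
Proof.
  intros hF hG. split; [|split].
  - exists (fun _ => True), (fun _ => True). repeat split; apply filter_true; auto.
  - intros A B [A1 [B1 [h1 [h2 h3]]]] [A2 [B2 [h4 [h5 h6]]]].
    exists (fun x => A1 x /\ A2 x), (fun y => B1 y /\ B2 y).
    split; [apply filter_and; auto|split; [apply filter_and; auto|]].
    intros a b [] []. split; auto.
  - intros A B h [A1 [B1 [h1 [h2 h3]]]]. exists A1, B1. repeat split; auto.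
Qed.

Lemma ultra_finer_prodF {X Y : Type} {U : setsys X} {V : setsys Y} {R : setsys (X * Y)} :
  is_ultra U -> is_ultra V -> is_ultra R -> finer (prodF U V) R ->
  push fst R = U /\ push snd R = V.
Proof.
  intros HU HV HR h.
  split; apply ultra_finer_eq; auto using ultra_push; intros A hA; apply h.
  - exists A, (fun _ => True). repeat split; auto. apply filter_true, ultra_filter, HV.
  - exists (fun _ => True), A. repeat split; auto. apply filter_true, ultra_filter, HU.
Qed.

Lemma ultra_lift_push {X Y : Type} (f : X -> Y) {H : setsys X} {V : setsys Y} :
  is_filter H -> is_ultra V -> finer (push f H) V ->
  exists R, is_ultra R /\ finer H R /\ push f R = V.
Proof.
  intros hH HV hHV. pose proof (ultra_filter HV) as hV.
  destruct (ultra_of_base (I := {S | H S} * {T | V T})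
              (fun i x => proj1_sig (fst i) x /\ proj1_sig (snd i) (f x))) as [R [HR hR]].
  - exact (inhabits (exist _ _ (filter_true hH), exist _ _ (filter_true hV))).
  - intros [[S1 h1] [T1 k1]] [[S2 h2] [T2 k2]].
    exists (exist _ _ (filter_and hH h1 h2), exist _ _ (filter_and hV k1 k2)).
    simpl. tauto.
  - intros [[S h] [T k]]. simpl. apply NNPP. intro N.
    apply (ultra_compl HV k). apply hHV.
    apply (filter_mono hH) with (2 := h). intros x Sx Tx. apply N. eauto.
  - exists R. split; [exact HR|split].
    + intros S hS.
      apply (filter_mono (ultra_filter HR))
        with (2 := hR (exist _ S hS, exist _ _ (filter_true hV))).
      simpl. tauto.
    + apply ultra_finer_eq; [exact HV|apply ultra_push, HR|]. intros T k.
      apply (filter_mono (ultra_filter HR))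
        with (2 := hR (exist _ _ (filter_true hH), exist _ T k)).
      simpl. tauto.
Qed.

Definition prod_filter {J : Type} {A : J -> Type} (F : forall j, setsys (A j)) :
    setsys (forall j, A j) :=
  fun S => exists (l : list J) (B : forall j, A j -> Prop),
    (forall j, F j (B j)) /\ (forall j, ~ In j l -> forall a, B j a) /\
    (forall x, (forall j, B j (x j)) -> S x).

Section ProductFilter.

Context {J : Type} {A : J -> Type} {F : forall j, setsys (A j)}.
Hypothesis hF : forall j, is_filter (F j).

Lemma filter_prod_filter : is_filter (prod_filter F).
Proof.
  split; [|split].
  - exists nil, (fun _ _ => True). split; [intro j; apply filter_true, hF|auto].
  - intros S1 S2 [l1 [B1 [h1 [f1 s1]]]] [l2 [B2 [h2 [f2 s2]]]].
    exists (l1 ++ l2), (fun j a => B1 j a /\ B2 j a). split; [|split].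
    + intro j. apply filter_and; auto.
    + intros j n a. rewrite in_app_iff in n. split; [apply f1|apply f2]; tauto.
    + intros x hx. split; [apply s1|apply s2]; intro j; apply hx.
  - intros S1 S2 h [l [B [hB [hf hs]]]]. exists l, B. auto.
Qed.

Lemma prod_filter_proj j (C : A j -> Prop) : F j C -> prod_filter F (fun x => C (x j)).
Proof.
  intro hC. exists (j :: nil), (upd (T := fun k => A k -> Prop) (fun _ _ => True) j C).
  split; [|split].
  - intro k. destruct (classic (j = k)) as [<-|n].
    + rewrite upd_same. exact hC.
    + rewrite upd_other by exact n. apply filter_true, hF.
  - intros k n a. rewrite upd_other; [exact I|]. intros <-. apply n. left. reflexivity.
  - intros x hx. specialize (hx j). rewrite upd_same in hx. exact hx.
Qed.

End ProductFilter.

(* Surjectivity of the [q j] makes [U] finer than the image of the product filter of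
   the [V j], so an ultrafilter refining that product filter with image [U] exists. *)
Lemma ultra_prod_lift {J : Type} {A B : J -> Type} (q : forall j, A j -> B j)
    (U : setsys (forall j, B j)) (V : forall j, setsys (A j)) :
  (forall j b, exists a, q j a = b) -> is_ultra U -> (forall j, is_ultra (V j)) ->
  (forall j, push (q j) (V j) = push (fun c => c j) U) ->
  exists W, is_ultra W /\ (forall j, push (fun x => x j) W = V j) /\
            push (fun x j => q j (x j)) W = U.
Proof.
  intros hq HU HV hVU.
  assert (hV : forall j, is_filter (V j)) by (intro j; apply ultra_filter, HV).
  assert (hfin : finer (push (fun x j => q j (x j)) (prod_filter V)) U).
  { intros S [l [Bs [hB [hfull hS]]]].
    assert (hT : U (fun c => forall j, In j l -> exists a, Bs j a /\ q j a = c j)).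
    { apply filter_forall_list; [apply ultra_filter, HU|]. intros j _.
      change (push (fun c => c j) U (fun b => exists a, Bs j a /\ q j a = b)).
      rewrite <- hVU. apply (filter_mono (hV j)) with (2 := hB j). intros a Ba. eauto. }
    apply (filter_mono (ultra_filter HU)) with (2 := hT). intros c hc.
    destruct (dependent_choice (fun j a => Bs j a /\ q j a = c j)) as [x hx].
    { intro j. destruct (classic (In j l)) as [i|n]; [exact (hc j i)|].
      destruct (hq j (c j)) as [a ha]. exists a. split; [apply hfull|]; assumption. }
    replace c with (fun j => q j (x j)); [apply hS; intro j; apply hx|].
    apply functional_extensionality_dep. intro j. apply hx. }
  destruct (ultra_lift_push _ (filter_prod_filter hV) HU hfin) as [W [HW [hVW hWU]]].
  exists W. split; [exact HW|split; [|exact hWU]].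
  intro j. apply ultra_finer_eq; [apply HV|apply ultra_push, HW|].
  intros C hC. apply hVW, prod_filter_proj; assumption.
Qed.

(** * Continuity, products and function spaces *)

Definition prod2Ps (A B : PsSpace) : PsSpace :=
  {| pt := A * B;
     conv := fun R w => is_ultra R /\ conv A (push fst R) (fst w) /\
                        conv B (push snd R) (snd w) |}.

Definition initialPs (E : PsSpace) {P : Type} (h : P -> E) : PsSpace :=
  {| pt := P; conv := fun U x => is_ultra U /\ conv E (push h U) (h x) |}.

Section Continuity.

Implicit Types A B C W E : PsSpace.

Lemma continuous_comp {A B C} (f : A -> B) (g : B -> C) :
  continuous A B f -> continuous B C g -> continuous A C (fun x => g (f x)).
Proof. intros hf hg U x cU. exact (hg _ _ (hf _ _ cU)). Qed.

Lemma continuous_ext {A B} (f g : A -> B) :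
  (forall x, f x = g x) -> continuous A B f -> continuous A B g.
Proof. intro h. replace g with f; [trivial|]. apply functional_extensionality, h. Qed.

Lemma continuous_const {A B} (y : B) :
  PsAxioms A -> PsAxioms B -> continuous A B (fun _ => y).
Proof. intros hA hB U x cU. rewrite (push_const y (proj1 hA _ _ cU)). apply hB. Qed.

Lemma continuous_proj {J : Type} (X : J -> PsSpace) j :
  continuous (prodPs X) (X j) (fun x => x j).
Proof. intros U x [_ h]. apply h. Qed.

Lemma continuous_prodPs {J : Type} {W} (X : J -> PsSpace) (f : W -> forall j, X j) :
  PsAxioms W -> (forall j, continuous W (X j) (fun w => f w j)) ->
  continuous W (prodPs X) f.
Proof.
  intros hW hf U w cU. split; [apply ultra_push, (proj1 hW _ _ cU)|]. intro j. apply hf, cU.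
Qed.

Lemma continuous_snd {A B} : continuous (prod2Ps A B) B snd.
Proof. intros R w [_ [_ h]]. exact h. Qed.

Lemma continuous_pair {W A B} (f : W -> A) (g : W -> B) :
  PsAxioms W -> continuous W A f -> continuous W B g ->
  continuous W (prod2Ps A B) (fun w => (f w, g w)).
Proof.
  intros hW hf hg U w cU. split; [apply ultra_push, (proj1 hW _ _ cU)|].
  split; [apply hf|apply hg]; exact cU.
Qed.

Lemma topPs_PsAxioms (T : TopSpace) : PsAxioms (topPs T).
Proof.
  split; [intros U x [HU _]; exact HU|]. intro x. split; [apply ultra_principal|].
  intros O _ Ox. exact Ox.
Qed.

Lemma prodPs_PsAxioms {J : Type} (X : J -> PsSpace) :
  (forall j, PsAxioms (X j)) -> PsAxioms (prodPs X).
Proof.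
  intro hX. split; [intros U x [HU _]; exact HU|]. intro x.
  split; [apply ultra_principal|]. intro j. apply (proj2 (hX j)).
Qed.

Lemma prod2Ps_PsAxioms {A B} : PsAxioms A -> PsAxioms B -> PsAxioms (prod2Ps A B).
Proof.
  intros hA hB. split; [intros U x [HU _]; exact HU|]. intro x.
  split; [apply ultra_principal|split; [apply hA|apply hB]].
Qed.

Lemma initialPs_PsAxioms {E} {P : Type} (h : P -> E) :
  PsAxioms E -> PsAxioms (initialPs E h).
Proof.
  intro hE. split; [intros U x [HU _]; exact HU|]. intro x.
  split; [apply ultra_principal|apply hE].
Qed.

Lemma initialPs_is_epitop {E} {P : Type} (h : P -> E) :
  is_epitop E -> is_epitop (initialPs E h).
Proof.
  intros [I [Y [Z [k [hT hk]]]]]. exists I, Y, Z, (fun i x => k i (h x)).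
  split; [exact hT|]. intros U x. simpl. split.
  - intros [HU cE]. split; [exact HU|]. exact (proj2 (proj1 (hk _ _) cE)).
  - intros [HU ck]. split; [exact HU|]. apply hk. split; [apply ultra_push, HU|exact ck].
Qed.

Lemma continuous_initialPs {W E} {P : Type} (h : P -> E) (g : W -> P) :
  PsAxioms W -> continuous W E (fun w => h (g w)) -> continuous W (initialPs E h) g.
Proof.
  intros hW hg U w cU. split; [apply ultra_push, (proj1 hW _ _ cU)|]. apply hg, cU.
Qed.

End Continuity.

Lemma ultra_fconv {X : PsSpace} {U x} : is_ultra U -> conv X U x -> fconv X U x.
Proof. intros HU cU V HV hUV. rewrite (ultra_finer_eq HU HV hUV). exact cU. Qed.

Lemma fconv_ultra {X : PsSpace} {U x} : is_ultra U -> fconv X U x -> conv X U x.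
Proof. intros HU h. apply h; [exact HU|]. intros A a. exact a. Qed.

Lemma fconv_mono {X : PsSpace} {F G x} : finer F G -> fconv X F x -> fconv X G x.
Proof. intros h cF U HU hGU. apply cF; [exact HU|]. intros A a. apply hGU, h, a. Qed.

Lemma fconv_top_iff {Z : TopSpace} {F : setsys Z} {z} :
  is_filter F -> fconv (topPs Z) F z <-> forall O, is_open Z O -> O z -> F O.
Proof.
  intro hF. split.
  - intros cF O hO Oz. apply (filter_mem_of_ultra O hF). intros U HU hFU.
    exact (proj2 (cF U HU hFU) O hO Oz).
  - intros h U HU hFU. split; [exact HU|]. intros O hO Oz. apply hFU, h; assumption.
Qed.

Lemma top_fconv_prodF {A B : Type} {Z : TopSpace} (e : A * B -> Z) {F : setsys A}
    {G : setsys B} z :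
  is_filter F -> is_filter G ->
  (forall R, is_ultra R -> finer G R -> fconv (topPs Z) (push e (prodF F R)) z) ->
  fconv (topPs Z) (push e (prodF F G)) z.
Proof.
  intros hF hG h. pose proof (filter_prodF hF hG) as hFG.
  apply (fconv_top_iff (filter_push e hFG)). intros O hO Oz.
  apply (filter_mem_of_ultra _ hFG). intros R HR hFGR.
  pose proof (ultra_push snd HR) as HR2.
  assert (hGR : finer G (push snd R)).
  { intros T hT. apply hFGR. exists (fun _ => True), T.
    repeat split; [apply filter_true, hF|exact hT|trivial]. }
  destruct (proj1 (fconv_top_iff (filter_push e (filter_prodF hF (ultra_filter HR2))))
              (h _ HR2 hGR) O hO Oz) as [S [T [hS [hT hST]]]].
  assert (hSR : R (fun p => S (fst p))).
  { apply hFGR. exists S, (fun _ => True).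
    repeat split; [exact hS|apply filter_true, hG|trivial]. }
  apply (filter_mono (ultra_filter HR)) with (2 := filter_and (ultra_filter HR) hSR hT).
  intros [a b] [Sa Tb]. exact (hST a b Sa Tb).
Qed.

Lemma continuous_section {A W Z : PsSpace} (f : A * W -> Z) (a : A) :
  PsAxioms A -> PsAxioms W -> continuous (prod2Ps A W) Z f ->
  continuous W Z (fun w => f (a, w)).
Proof.
  intros hA hW hf R w cR. pose proof (proj1 hW _ _ cR) as HR.
  apply (hf (push (fun w => (a, w)) R) (a, w)).
  split; [apply ultra_push, HR|split; [|exact cR]].
  change (conv A (push (fun _ => a) R) a). rewrite (push_const a HR). apply hA.
Qed.

Lemma continuous_uncurry {A W Z : PsSpace} (F : A -> fspace W Z) :
  continuous A (fspace W Z) F ->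
  continuous (prod2Ps A W) Z (fun p => proj1_sig (F (fst p)) (snd p)).
Proof.
  intros hF R p [HR [cA cW]]. destruct (hF _ _ cA) as [_ H].
  pose proof (H (push snd R) (snd p) (filter_push snd (ultra_filter HR))
                (ultra_fconv (ultra_push snd HR) cW)) as cZ.
  apply fconv_ultra; [apply ultra_push, HR|]. apply (fconv_mono (F := _)) with (2 := cZ).
  intros T [S [S' [hS [hS' hT]]]].
  apply (filter_mono (ultra_filter HR)) with (2 := filter_and (ultra_filter HR) hS hS').
  intros q [s s']. exact (hT _ _ s s').
Qed.

Lemma continuous_fspace_of_uncurry {A W : PsSpace} {Z : TopSpace}
    (F : A -> fspace W (topPs Z)) :
  PsAxioms A ->
  continuous (prod2Ps A W) (topPs Z) (fun p => proj1_sig (F (fst p)) (snd p)) ->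
  continuous A (fspace W (topPs Z)) F.
Proof.
  intros hA hf U a cU. pose proof (proj1 hA _ _ cU) as HU.
  split; [apply ultra_push, HU|]. intros G w hG cG.
  apply top_fconv_prodF; [apply filter_push, ultra_filter, HU|exact hG|].
  intros R HR hGR RZ HRZ hfin.
  assert (hfin' : finer (push (fun p => proj1_sig (F (fst p)) (snd p)) (prodF U R)) RZ).
  { intros T [S [S' [hS [hS' hT]]]]. apply hfin.
    exists (fun g => exists u, S u /\ F u = g), S'. split; [|split; [exact hS'|]].
    - apply (filter_mono (ultra_filter HU)) with (2 := hS). intros u s. eauto.
    - intros g b [u [s <-]] s'. exact (hT u b s s'). }
  destruct (ultra_lift_push _ (filter_prodF (ultra_filter HU) (ultra_filter HR)) HRZ hfin')
    as [R2 [HR2 [hUR <-]]].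
  destruct (ultra_finer_prodF HU HR HR2 hUR) as [e1 e2].
  apply (hf R2 (a, w)). split; [exact HR2|]. rewrite e1, e2.
  split; [exact cU|exact (cG R HR hGR)].
Qed.

Lemma fspace_PsAxioms (W Z : PsSpace) : PsAxioms (fspace W Z).
Proof.
  split; [intros U f [HU _]; exact HU|]. intro f. split; [apply ultra_principal|].
  intros G w hG cG RZ HRZ hfin.
  assert (hfin' : finer (push (proj1_sig f) G) RZ).
  { intros S hS. apply hfin. exists (fun g => g = f), (fun b => S (proj1_sig f b)).
    split; [reflexivity|split; [exact hS|]]. intros g b -> s. exact s. }
  destruct (ultra_lift_push _ hG HRZ hfin') as [R [HR [hGR <-]]].
  apply (proj2_sig f). apply cG; assumption.
Qed.

(* The coarsest topology on [W] in which the ultrafilter [V] converges to [w]: every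
   point other than [w] is isolated. *)
Definition convTop (W : PsSpace) (V : setsys W) (w : W) : TopSpace :=
  {| tpt := pt W; is_open := fun O => O w -> V O |}.

Section ConvTop.

Context {W : PsSpace} {V : setsys W} {w : W}.
Hypothesis hW : PsAxioms W.
Hypothesis cV : conv W V w.

Let HV : is_ultra V := proj1 hW _ _ cV.

Lemma convTop_TopAxioms : TopAxioms (convTop W V w).
Proof.
  pose proof (ultra_filter HV) as hV. split; [|split]; simpl.
  - intros _. apply filter_true, hV.
  - intros A B hA hB [a b]. apply filter_and; auto.
  - intros I A hA [i Ai]. apply (filter_mono hV) with (2 := hA i Ai). eauto.
Qed.

Lemma convTop_conv_cases U x :
  conv (topPs (convTop W V w)) U x -> U = principal x \/ (x = w /\ U = V).
Proof.
  intros [HU hop]. pose proof (ultra_filter HU) as hU.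
  destruct (classic (U (fun y => y = x))) as [hx|hx].
  - left. apply ultra_finer_eq; [apply ultra_principal|exact HU|].
    intros A Ax. apply (filter_mono hU) with (2 := hx). intros y ->. exact Ax.
  - assert (xw : x = w).
    { apply NNPP. intro n. apply hx, hop; [|reflexivity]. intro e. congruence. }
    subst x. right. split; [reflexivity|]. apply ultra_finer_eq; [exact HV|exact HU|].
    intros B hB. destruct (proj2 HU (fun y => y = w)) as [u|u]; [contradiction|].
    assert (hBw : U (fun y => B y \/ y = w)).
    { apply hop; [|right; reflexivity]. intros _.
      apply (filter_mono (ultra_filter HV)) with (2 := hB). intros y b. left. exact b. }
    apply (filter_mono hU) with (2 := filter_and hU hBw u).
    intros y [[b|e] n]; [exact b|contradiction].
Qed.

Lemma convTop_to_conv U x : conv (topPs (convTop W V w)) U x -> conv W U x.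
Proof.
  intro cU. destruct (convTop_conv_cases U x cU) as [->|[-> ->]]; [apply hW|exact cV].
Qed.

Lemma conv_convTop : conv (topPs (convTop W V w)) V w.
Proof. split; [exact HV|]. intros O hO Ow. exact (hO Ow). Qed.

Lemma convTop_continuous (Z : TopSpace) (f : W -> Z) :
  continuous W (topPs Z) f -> continuous (topPs (convTop W V w)) (topPs Z) f.
Proof.
  intros hf U x cU. destruct (convTop_conv_cases U x cU) as [->|[-> ->]].
  - apply topPs_PsAxioms.
  - exact (hf _ _ cV).
Qed.

End ConvTop.

(* [Z^W] carries the initial structure of the maps [Z^W -> Z^(convTop V w)], one for
   each convergent [V --> w] in [W]. *)
Lemma fspace_is_epitop (W : PsSpace) (Z : TopSpace) :
  PsAxioms W -> TopAxioms Z -> is_epitop (fspace W (topPs Z)).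
Proof.
  intros hW hZ.
  set (I := {p : setsys W * W | conv W (fst p) (snd p)}).
  set (Y := fun i : I => convTop W (fst (proj1_sig i)) (snd (proj1_sig i))).
  set (h := fun (i : I) (f : fspace W (topPs Z)) =>
    exist _ (proj1_sig f) (convTop_continuous hW (proj2_sig i) Z _ (proj2_sig f))
      : fspace (topPs (Y i)) (topPs Z)).
  exists I, Y, (fun _ => Z), h. split.
  { intro i. split; [exact (convTop_TopAxioms hW (proj2_sig i))|exact hZ]. }
  intros U f. split.
  - intros [HU cU]. split; [exact HU|]. intro i. split; [apply ultra_push, HU|].
    intros G x hG cG.
    assert (cGW : fconv W G x).
    { intros R HR hGR. exact (convTop_to_conv hW (proj2_sig i) _ _ (cG R HR hGR)). }
    apply (fconv_mono (F := _)) with (2 := cU G x hG cGW).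
    intros S [A [B [hA [hB hAB]]]]. exists (fun g => exists f', A f' /\ h i f' = g), B.
    split; [|split; [exact hB|]].
    + apply (filter_mono (ultra_filter HU)) with (2 := hA). intros f' a. eauto.
    + intros g b [f' [a <-]] bb. exact (hAB f' b a bb).
  - intros [HU ch]. split; [exact HU|]. intros G x hG cG.
    apply top_fconv_prodF; [apply ultra_filter, HU|exact hG|]. intros R HR hGR.
    set (i := exist (fun p : setsys W * W => conv W (fst p) (snd p)) (R, x) (cG R HR hGR)
              : I).
    destruct (ch i) as [_ chi].
    pose proof (ultra_fconv (X := topPs (Y i)) HR (conv_convTop hW (proj2_sig i))) as cR.
    apply (fconv_mono (F := _)) with (2 := chi R x (ultra_filter HR) cR).
    intros S [A [B [hA [hB hAB]]]]. exists (fun f' => A (h i f')), B.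
    split; [exact hA|split; [exact hB|]]. intros f' b a bb. exact (hAB _ b a bb).
Qed.

(** * Path components *)

Lemma pathrel_refl (Y : PsSpace) (y : Y) : PsAxioms Y -> pathrel Y y y.
Proof.
  intro hY. exists (fun _ => y).
  split; [exact (continuous_const y (topPs_PsAxioms unitI) hY)|split; reflexivity].
Qed.

Lemma pathrel_prod {J : Type} (X : J -> PsSpace) (x z : prodPs X) :
  pathrel (prodPs X) x z <-> forall j, pathrel (X j) (x j) (z j).
Proof.
  split.
  - intros [p [hp [<- <-]]] j. exists (fun t => p t j).
    split; [exact (continuous_comp _ _ hp (continuous_proj X j))|split; reflexivity].
  - intro h.
    destruct (dependent_choice (A := fun j => unitI -> X j)
      (fun j q => continuous (topPs unitI) (X j) q /\ q i0 = x j /\ q i1 = z j) h)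
      as [q hq].
    exists (fun t j => q j t). split; [|split].
    + apply continuous_prodPs; [apply topPs_PsAxioms|]. intro j. apply hq.
    + apply functional_extensionality_dep. intro j. apply hq.
    + apply functional_extensionality_dep. intro j. apply hq.
Qed.

Lemma pi0proj_eq_iff (Y : PsSpace) (x y : Y) :
  pi0proj Y x = pi0proj Y y <-> pcomp Y x = pcomp Y y.
Proof.
  split; [intro e; exact (f_equal (@proj1_sig _ _) e)|intro e; apply subset_eq_compat, e].
Qed.

Lemma pcomp_prod {J : Type} (X : J -> PsSpace) (x : prodPs X) :
  pcomp (prodPs X) x = fun z => forall j, pcomp (X j) (x j) (z j).
Proof.
  apply functional_extensionality. intro z.
  apply propositional_extensionality, pathrel_prod.
Qed.

Section ProductComponents.

Context {J : Type} (X : J -> PsSpace).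
Hypothesis hX : forall j, PsAxioms (X j).

(* Moving only the [j]-th coordinate of [x] along a path stays in the component of [x]. *)
Lemma pcomp_prod_coord (x y : prodPs X) j a :
  pcomp (prodPs X) x = pcomp (prodPs X) y -> pathrel (X j) (x j) a -> pathrel (X j) (y j) a.
Proof.
  intros e ha.
  assert (hx : pcomp (prodPs X) x (upd (T := fun j => X j) x j a)).
  { rewrite pcomp_prod. intro k. destruct (classic (j = k)) as [<-|n].
    - rewrite upd_same. exact ha.
    - rewrite upd_other by exact n. apply pathrel_refl, hX. }
  rewrite e, pcomp_prod in hx. specialize (hx j). rewrite upd_same in hx. exact hx.
Qed.

Lemma pi0proj_prod_eq (x y : prodPs X) :
  pi0proj (prodPs X) x = pi0proj (prodPs X) y <->
  forall j, pi0proj (X j) (x j) = pi0proj (X j) (y j).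
Proof.
  rewrite pi0proj_eq_iff. split.
  - intros e j. apply pi0proj_eq_iff, functional_extensionality. intro a.
    apply propositional_extensionality.
    split; apply pcomp_prod_coord; [exact e|symmetry; exact e].
  - intro h. rewrite !pcomp_prod.
    assert (E : (fun j => pcomp (X j) (x j)) = (fun j => pcomp (X j) (y j))).
    { apply functional_extensionality_dep. intro j. apply pi0proj_eq_iff, h. }
    change ((fun z => forall j, (fun j => pcomp (X j) (x j)) j (z j)) =
            (fun z => forall j, (fun j => pcomp (X j) (y j)) j (z j))).
    rewrite E. reflexivity.
Qed.

End ProductComponents.

Definition rep {Y : PsSpace} (c : pi0car Y) : Y :=
  proj1_sig (constructive_indefinite_description _ (proj2_sig c)).

Lemma pi0proj_rep {Y : PsSpace} (c : pi0car Y) : pi0proj Y (rep c) = c.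
Proof.
  destruct c as [C hC]. unfold rep, pi0proj. apply subset_eq_compat. symmetry.
  exact (proj2_sig (constructive_indefinite_description _ hC)).
Qed.

Section Pi0ps.

Context {Y : PsSpace}.
Hypothesis hY : PsAxioms Y.

Lemma pi0ps_PsAxioms : PsAxioms (pi0ps Y).
Proof.
  split; [|intro c; left; reflexivity].
  intros U c [->|[V [x [cV [_ ->]]]]];
    [apply ultra_principal|apply ultra_push, (proj1 hY _ _ cV)].
Qed.

Lemma pi0proj_continuous : continuous Y (pi0ps Y) (pi0proj Y).
Proof. intros V x cV. right. exists V, x. auto. Qed.

Lemma pi0ps_conv_lift U c :
  conv (pi0ps Y) U c -> exists V x, conv Y V x /\ c = pi0proj Y x /\ U = push (pi0proj Y) V.
Proof.
  intros [->|h]; [|exact h]. exists (principal (rep c)), (rep c).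
  split; [apply hY|split; [symmetry; apply pi0proj_rep|]].
  change (principal c = principal (pi0proj Y (rep c))). rewrite pi0proj_rep. reflexivity.
Qed.

Lemma continuous_from_pi0ps {E : PsSpace} (h : pi0car Y -> E) :
  PsAxioms E -> continuous Y E (fun x => h (pi0proj Y x)) -> continuous (pi0ps Y) E h.
Proof. intros hE hh U c [->|[V [x [cV [-> ->]]]]]; [apply hE|exact (hh _ _ cV)]. Qed.

Lemma pi0epi_PsAxioms : PsAxioms (pi0epi Y).
Proof.
  split; [intros U c [HU _]; exact HU|]. intro c.
  split; [apply ultra_principal|]. intros s hs _ _. apply hs.
Qed.

Lemma pi0ps_to_pi0epi U c : conv (pi0ps Y) U c -> conv (pi0epi Y) U c.
Proof.
  intro cU. split; [exact (proj1 pi0ps_PsAxioms _ _ cU)|]. intros s hs _ hcont.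
  destruct cU as [->|[V [x [cV [-> ->]]]]]; [apply hs|exact (hcont _ _ cV)].
Qed.

(* [pi0epi Y] is finer than the initial structure of any such [h], as the latter is an
   epitopological structure making the projection continuous. *)
Lemma pi0epi_universal {E : PsSpace} (h : pi0car Y -> E) :
  PsAxioms E -> is_epitop E -> continuous Y E (fun x => h (pi0proj Y x)) ->
  continuous (pi0epi Y) E h.
Proof.
  intros hE hEepi hh U c [_ cU].
  exact (proj2 (cU (conv (initialPs E h)) (initialPs_PsAxioms h hE)
                   (initialPs_is_epitop h hEepi) (continuous_initialPs h _ hY hh))).
Qed.

End Pi0ps.

Lemma continuous_pi0epi_map {Y Y' : PsSpace} (k : Y -> Y') (h : pi0car Y -> pi0car Y') :
  PsAxioms Y -> continuous Y Y' k -> (forall x, h (pi0proj Y x) = pi0proj Y' (k x)) ->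
  continuous (pi0epi Y) (pi0epi Y') h.
Proof.
  intros hY hk hh U c cU. split; [apply ultra_push, (proj1 cU)|].
  intros s hs hsepi hscont.
  refine (pi0epi_universal (E := {| pt := pi0car Y'; conv := s |}) hY h hs hsepi _ U c cU).
  apply (continuous_ext (B := {| pt := pi0car Y'; conv := s |})
           (fun x => pi0proj Y' (k x)));
    [intro x; symmetry; apply hh|].
  exact (continuous_comp _ _ hk hscont).
Qed.

Definition pi0_prod_map {J : Type} (X : J -> PsSpace) (c : pi0car (prodPs X)) :
    forall j, pi0car (X j) :=
  fun j => pi0proj (X j) (rep c j).

Definition pi0_prod_inv {J : Type} (X : J -> PsSpace) (y : forall j, pi0car (X j)) :
    pi0car (prodPs X) :=
  pi0proj (prodPs X) (fun j => rep (y j)).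

Section Pi0Product.

Context {J : Type} (X : J -> PsSpace).
Hypothesis hX : forall j, PsAxioms (X j).

Lemma pi0_prod_map_proj x :
  pi0_prod_map X (pi0proj (prodPs X) x) = fun j => pi0proj (X j) (x j).
Proof.
  apply functional_extensionality_dep. apply (pi0proj_prod_eq X hX). apply pi0proj_rep.
Qed.

Lemma pi0_prod_inv_proj x :
  pi0_prod_inv X (fun j => pi0proj (X j) (x j)) = pi0proj (prodPs X) x.
Proof. apply (pi0proj_prod_eq X hX). intro j. apply pi0proj_rep. Qed.

Lemma pi0_prod_map_inv y : pi0_prod_map X (pi0_prod_inv X y) = y.
Proof.
  unfold pi0_prod_inv. rewrite pi0_prod_map_proj.
  apply functional_extensionality_dep. intro j. apply pi0proj_rep.
Qed.

Lemma pi0_prod_inv_map c : pi0_prod_inv X (pi0_prod_map X c) = c.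
Proof. rewrite <- (pi0proj_rep c), pi0_prod_map_proj. apply pi0_prod_inv_proj. Qed.

Lemma continuous_pi0_prod_map_ps :
  continuous (pi0ps (prodPs X)) (prodPs (fun j => pi0ps (X j))) (pi0_prod_map X).
Proof.
  apply continuous_from_pi0ps.
  { apply prodPs_PsAxioms. intro j. apply pi0ps_PsAxioms, hX. }
  apply (continuous_ext (A := prodPs X) (B := prodPs (fun j => pi0ps (X j)))
           (fun x j => pi0proj (X j) (x j))).
  { intro x. symmetry. apply pi0_prod_map_proj. }
  apply continuous_prodPs; [apply prodPs_PsAxioms, hX|]. intro j.
  exact (continuous_comp _ _ (continuous_proj X j) pi0proj_continuous).
Qed.

(* A convergent ultrafilter on the product of the [pi0ps (X j)] is the image of a
   convergent ultrafilter on the product of the [X j]. *)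
Lemma continuous_pi0_prod_inv_ps :
  continuous (prodPs (fun j => pi0ps (X j))) (pi0ps (prodPs X)) (pi0_prod_inv X).
Proof.
  intros U y [HU cU].
  destruct (dependent_choice (A := fun j => (setsys (X j) * X j)%type)
    (fun j p => conv (X j) (fst p) (snd p) /\ y j = pi0proj (X j) (snd p) /\
                push (fun c => c j) U = push (pi0proj (X j)) (fst p))) as [Vx hVx].
  { intro j. destruct (pi0ps_conv_lift (hX j) _ _ (cU j)) as [V [x h]].
    exists (V, x). exact h. }
  destruct (ultra_prod_lift (fun j => pi0proj (X j)) U (fun j => fst (Vx j)))
    as [W [HW [hWj hWU]]].
  - intros j c. exists (rep c). apply pi0proj_rep.
  - exact HU.
  - intro j. apply (proj1 (hX j) _ (snd (Vx j))), hVx.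
  - intro j. symmetry. apply hVx.
  - right. exists W, (fun j => snd (Vx j)). split; [|split].
    + split; [exact HW|]. intro j. rewrite hWj. apply hVx.
    + rewrite <- (pi0_prod_inv_proj (fun j => snd (Vx j))). f_equal.
      apply functional_extensionality_dep. intro j. apply hVx.
    + subst U. exact (push_ext (fun x => pi0_prod_inv X (fun j => pi0proj (X j) (x j)))
                               (pi0proj (prodPs X)) W pi0_prod_inv_proj).
Qed.

End Pi0Product.

(** * Finite products and [pi0epi] *)

(* Currying turns [f] into a map [pi0ps Y -> Z^W]; since [Z^W] is epitopological, that
   map stays continuous on [pi0epi Y]. *)
Lemma pi0epi_upgrade {Y W : PsSpace} {Z : TopSpace} (f : pi0car Y * W -> Z) :
  PsAxioms Y -> PsAxioms W -> TopAxioms Z ->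
  continuous (prod2Ps (pi0ps Y) W) (topPs Z) f ->
  continuous (prod2Ps (pi0epi Y) W) (topPs Z) f.
Proof.
  intros hY hW hZ hf.
  set (Psi := fun c : pi0car Y =>
    exist _ (fun w => f (c, w))
      (continuous_section (A := pi0ps Y) (Z := topPs Z) f c (pi0ps_PsAxioms hY) hW hf)
      : fspace W (topPs Z)).
  assert (hf' : forall p, f (fst p, snd p) = f p) by (intros [c w]; reflexivity).
  assert (hPsi : continuous (pi0ps Y) (fspace W (topPs Z)) Psi).
  { apply continuous_fspace_of_uncurry; [apply pi0ps_PsAxioms, hY|].
    apply (continuous_ext (A := prod2Ps (pi0ps Y) W) (B := topPs Z) f);
      [intro p; symmetry; apply hf'|exact hf]. }
  apply (continuous_ext (A := prod2Ps (pi0epi Y) W) (B := topPs Z)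
           (fun p => proj1_sig (Psi (fst p)) (snd p)) f hf').
  apply continuous_uncurry, pi0epi_universal; [exact hY|apply fspace_PsAxioms| |].
  - apply fspace_is_epitop; assumption.
  - exact (continuous_comp _ _ pi0proj_continuous hPsi).
Qed.

(* This is [pi0epi Y] when [P] holds and [pi0ps Y] otherwise, [pi0ps Y] being finer. *)
Definition pi0mix (Y : PsSpace) (P : Prop) : PsSpace :=
  {| pt := pi0car Y;
     conv := fun U c => conv (pi0ps Y) U c \/ (P /\ conv (pi0epi Y) U c) |}.

Definition mixProd {J : Type} (X : J -> PsSpace) (S : J -> Prop) : PsSpace :=
  prodPs (fun j => pi0mix (X j) (S j)).

Section MixedProducts.

Context {J : Type} (X : J -> PsSpace).
Hypothesis hX : forall j, PsAxioms (X j).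

Lemma mixProd_PsAxioms S : PsAxioms (mixProd X S).
Proof.
  apply prodPs_PsAxioms. intro j. split; [|intro c; left; left; reflexivity].
  intros U c [cU|[_ cU]]; [exact (proj1 (pi0ps_PsAxioms (hX j)) _ _ cU)|exact (proj1 cU)].
Qed.

(* [G] factors through [pi0epi (X j) * M], [M] being the new domain, the first factor
   overwriting the [j]-th coordinate of [M]; as that coordinate of [M] is never read,
   [M] can serve as the second factor of [pi0epi_upgrade]. *)
Lemma continuous_mixProd_add {B : PsSpace} {Z : TopSpace} (S : J -> Prop) (j : J)
    (G : (forall i, pi0car (X i)) * B -> Z) :
  PsAxioms B -> TopAxioms Z ->
  continuous (prod2Ps (mixProd X S) B) (topPs Z) G ->
  continuous (prod2Ps (mixProd X (fun i => j = i \/ S i)) B) (topPs Z) G.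
Proof.
  intros hB hZ hG.
  set (M := prod2Ps (mixProd X (fun i => j = i \/ S i)) B).
  assert (hM : PsAxioms M) by exact (prod2Ps_PsAxioms (mixProd_PsAxioms _) hB).
  set (P := prod2Ps (pi0ps (X j)) M).
  assert (hP : PsAxioms P) by exact (prod2Ps_PsAxioms (pi0ps_PsAxioms (hX j)) hM).
  set (m1 := fun q : P => upd (T := fun i => pi0car (X i)) (fst (snd q)) j (fst q)).
  assert (hm1 : continuous P (mixProd X S) m1).
  { apply continuous_prodPs; [exact hP|]. intro i. destruct (classic (j = i)) as [<-|n].
    - apply (continuous_ext (A := P) (B := pi0mix (X j) (S j)) fst).
      { intro q. symmetry. exact (upd_same (T := fun i => pi0car (X i)) _ _ _). }
      intros R q [_ [cR _]]. left. exact cR.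
    - apply (continuous_ext (A := P) (B := pi0mix (X i) (S i)) (fun q => fst (snd q) i)).
      { intro q. symmetry. exact (upd_other (T := fun i => pi0car (X i)) _ _ _ _ n). }
      intros R q [_ [_ [_ [[_ cR] _]]]]. destruct (cR i) as [c|[[e|s] c]];
        [left; exact c|contradiction|right; split; assumption]. }
  assert (hm : continuous P (prod2Ps (mixProd X S) B) (fun q => (m1 q, snd (snd q)))).
  { apply (continuous_pair (W := P) (A := mixProd X S) (B := B)); [exact hP|exact hm1|].
    exact (continuous_comp _ _ continuous_snd continuous_snd). }
  assert (hn : continuous M (prod2Ps (pi0epi (X j)) M) (fun w => (fst w j, w))).
  { apply (continuous_pair (W := M) (A := pi0epi (X j)) (B := M));
      [exact hM| |intros R w cR; exact cR].
    intros R w [_ [[_ cR] _]]. destruct (cR j) as [c|[_ c]]; [|exact c].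
    exact (pi0ps_to_pi0epi (hX j) _ _ c). }
  apply (continuous_ext (A := M) (B := topPs Z)
           (fun w => G (m1 (fst w j, w), snd (snd (fst w j, w))))).
  { intros [p t]. unfold m1. simpl. rewrite upd_id. reflexivity. }
  exact (continuous_comp _ _ hn
           (pi0epi_upgrade _ (hX j) hM hZ (continuous_comp _ _ hm hG))).
Qed.

End MixedProducts.

Section FiniteProducts.

Context {J : Type} (X : J -> PsSpace).
Hypothesis hJ : Finite J.
Hypothesis hX : forall j, PsAxioms (X j).

Lemma continuous_prodPs_pi0epi_fspace {Y Z : TopSpace}
    (F : (forall j, pi0car (X j)) -> fspace (topPs Y) (topPs Z)) :
  TopAxioms Z ->
  continuous (prodPs (fun j => pi0ps (X j))) (fspace (topPs Y) (topPs Z)) F ->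
  continuous (prodPs (fun j => pi0epi (X j))) (fspace (topPs Y) (topPs Z)) F.
Proof.
  intros hZ hF.
  set (G := fun q : (forall j, pi0car (X j)) * topPs Y => proj1_sig (F (fst q)) (snd q)).
  assert (hG : forall l,
    continuous (prod2Ps (mixProd X (fun i => In i l)) (topPs Y)) (topPs Z) G).
  { induction l as [|j l IH].
    - intros R w [HR [[HU cR] cY]].
      apply (continuous_uncurry (A := prodPs (fun j => pi0ps (X j))) F hF R w).
      split; [exact HR|split; [split; [exact HU|]|exact cY]].
      intro i. destruct (cR i) as [c|[[] _]]. exact c.
    - apply continuous_mixProd_add; [exact hX|apply topPs_PsAxioms|exact hZ|exact IH]. }
  destruct hJ as [l hl]. apply continuous_fspace_of_uncurry.
  { apply prodPs_PsAxioms. intro j. apply pi0epi_PsAxioms. }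
  intros R w [HR [[HU cR] cY]]. apply (hG l R w).
  split; [exact HR|split; [split; [exact HU|]|exact cY]].
  intro i. right. split; [apply hl|exact (cR i)].
Qed.

(* Continuity into an epitopological space reduces, through its defining family of maps,
   to continuity into the function spaces [Z^Y]. *)
Lemma continuous_prodPs_pi0epi {E : PsSpace} (F : (forall j, pi0car (X j)) -> E) :
  is_epitop E ->
  continuous (prodPs (fun j => pi0ps (X j))) E F ->
  continuous (prodPs (fun j => pi0epi (X j))) E F.
Proof.
  intros [I [Y [Z [h [hT hh]]]]] hF U p cU. apply hh.
  split; [apply ultra_push, (proj1 cU)|]. intro k.
  refine (continuous_prodPs_pi0epi_fspace (fun q => h k (F q)) (proj2 (hT k)) _ U p cU).
  intros V q cV. exact (proj2 (proj1 (hh _ _) (hF V q cV)) k).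
Qed.

Lemma continuous_pi0_prod_inv_epi :
  continuous (prodPs (fun j => pi0epi (X j))) (pi0epi (prodPs X)) (pi0_prod_inv X).
Proof.
  intros U y cU. split; [apply ultra_push, (proj1 cU)|]. intros s hs hsepi hscont.
  set (E := {| pt := pi0car (prodPs X); conv := s |}).
  refine (continuous_prodPs_pi0epi (E := E) (pi0_prod_inv X) hsepi _ U y cU).
  exact (continuous_comp _ _ (continuous_pi0_prod_inv_ps X hX)
           (continuous_from_pi0ps (E := E) (fun c => c) hs hscont)).
Qed.

End FiniteProducts.

Lemma continuous_pi0_prod_map_epi {J : Type} (X : J -> PsSpace) :
  (forall j, PsAxioms (X j)) ->
  continuous (pi0epi (prodPs X)) (prodPs (fun j => pi0epi (X j))) (pi0_prod_map X).
Proof.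
  intro hX. apply continuous_prodPs; [apply pi0epi_PsAxioms|]. intro j.
  apply (continuous_pi0epi_map (fun x : prodPs X => x j)).
  - apply prodPs_PsAxioms, hX.
  - apply continuous_proj.
  - intro x. rewrite (pi0_prod_map_proj X hX). reflexivity.
Qed.

Lemma Finite_lt (n : nat) : Finite {k : nat | (k < n)%nat}.
Proof.
  destruct (Fin_Finite n) as [l hl]. exists (map (@Fin.to_nat n) l).
  intros [k hk]. rewrite <- (Fin.to_nat_of_nat hk). apply in_map, hl.
Qed.

Theorem proposition4p1 :
  (forall (J : Type) (X : J -> PsSpace),
     (forall j, PsAxioms (X j)) ->
     exists phi : pi0ps (prodPs X) -> prodPs (fun j => pi0ps (X j)),
       (forall x : prodPs X,
          phi (pi0proj (prodPs X) x) = (fun j => pi0proj (X j) (x j))) /\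
       ps_iso (pi0ps (prodPs X)) (prodPs (fun j => pi0ps (X j))) phi)
  /\
  (forall (n : nat) (X : { k : nat | (k < n)%nat } -> PsSpace),
     (forall i, PsAxioms (X i) /\ is_epitop (X i)) ->
     exists phi : pi0epi (prodPs X) -> prodPs (fun i => pi0epi (X i)),
       (forall x : prodPs X,
          phi (pi0proj (prodPs X) x) = (fun i => pi0proj (X i) (x i))) /\
       ps_iso (pi0epi (prodPs X)) (prodPs (fun i => pi0epi (X i))) phi).
Proof.
  split.
  - intros J X hX. exists (pi0_prod_map X).
    split; [exact (pi0_prod_map_proj X hX)|]. exists (pi0_prod_inv X).
    split; [exact (pi0_prod_inv_map X hX)|split; [exact (pi0_prod_map_inv X hX)|]].
    split; [apply continuous_pi0_prod_map_ps|apply continuous_pi0_prod_inv_ps]; exact hX.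
  - intros n X hX'. assert (hX : forall i, PsAxioms (X i)) by (intro i; apply hX').
    exists (pi0_prod_map X).
    split; [exact (pi0_prod_map_proj X hX)|]. exists (pi0_prod_inv X).
    split; [exact (pi0_prod_inv_map X hX)|split; [exact (pi0_prod_map_inv X hX)|]].
    split; [apply continuous_pi0_prod_map_epi, hX|].
    apply continuous_pi0_prod_inv_epi; [apply Finite_lt|exact hX].
Qed.
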